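(* For every integer $n \geq 2$ there is an MSyDS $\mathcal{S}_n$ with $n$ nodes (and some finite number of layers), in which every local function is a threshold function and every master function is a symmetric Boolean function, whose phase space consists of a single cycle of length $2^n$.
   Context: A multilayer synchronous dynamical system (MSyDS) $\mathcal{S}$ over $\mathbb{B}=\{0,1\}$ with $k\ge 1$ layers consists of: a finite node set $V$ with $n$ nodes; undirected simple graphs $G_i=(V,E_i)$, $1\le i\le k$ (all layers share the node set $V$); for each layer $i$ and node $v$ a local function $f_{i,v}$ with output in $\mathbb{B}$ whose inputs are the states of the nodes in the closed neighborhood of $v$ in $G_i$ ($v$ and its neighbors in $G_i$); and for each node $v$ a master function $\psi_v:\mathbb{B}^k\to\mathbb{B}$. A configuration is a map $\mathcal{C}:V\to\mathbb{B}$. The successor of $\mathcal{C}$ is the configuration $\mathcal{C}'$ with $\mathcal{C}'(v)=\psi_v(f_{1,v}(\mathcal{C}),\dots,f_{k,v}(\mathcal{C}))$ for every $v$ (synchronous update), where $f_{i,v}(\mathcal{C})$ is $f_{i,v}$ evaluated on the states in $\mathcal{C}$ of the closed neighborhood of $v$ in $G_i$. The phase space is the directed graph on the $2^n$ configurations with an arc from each configuration to its successor. For an integer $\tau\ge0$, the $\tau$-threshold function equals 1 iff at least $\tau$ of its inputs equal 1 (a threshold larger than the number of inputs gives the constant-0 function); a threshold function is a $\tau$-threshold function for some $\tau\ge 0$. A Boolean function is symmetric if its value depends only on the number of 1's among its inputs. *)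

From mathcomp Require Import all_boot.
Set Implicit Arguments. Unset Strict Implicit. Unset Printing Implicit Defensive.

Definition config (n : nat) := {ffun 'I_n -> bool}.

Definition simple_graph (n : nat) (e : rel 'I_n) : Prop :=
  (forall u v, e u v = e v u) /\ (forall v, e v v = false).

Definition closed_nbhd (n : nat) (e : rel 'I_n) (v : 'I_n) : {set 'I_n} :=
  [set u | (u == v) || e v u].

(* a local function of node v in layer with graph e: any Boolean function
   whose inputs are the states of the closed neighborhood of v, i.e. a map
   on configurations depending only on the states in the closed neighborhood *)
Definition local_fun_of (n : nat) (e : rel 'I_n) (v : 'I_n)
    (f : config n -> bool) : Prop :=
  forall C D : config n, (forall u, u \in closed_nbhd e v -> C u = D u) -> f C = f D.

Definition is_threshold_fun (n : nat) (e : rel 'I_n) (v : 'I_n)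
    (f : config n -> bool) : Prop :=
  exists tau : nat, forall C : config n,
    f C = (tau <= #|[set u in closed_nbhd e v | C u]|).

Definition symmetric_bfun (k : nat) (psi : {ffun 'I_k -> bool} -> bool) : Prop :=
  forall x y : {ffun 'I_k -> bool},
    #|[set i | x i]| = #|[set i | y i]| -> psi x = psi y.

Definition msyds_step (n k : nat) (f : 'I_k -> 'I_n -> config n -> bool)
    (psi : 'I_n -> {ffun 'I_k -> bool} -> bool) (C : config n) : config n :=
  [ffun v => psi v [ffun i => f i v C]].

(* the phase space (functional graph of F on all configurations) is a single
   cycle through all configurations: every configuration reaches every other
   one; for a functional graph this is exactly "one cycle of length 2^n". *)
Definition phase_space_single_cycle (n : nat) (F : config n -> config n) : Prop :=
  forall C D : config n, exists m : nat, iter m F C = D.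

From mathcomp Require Import all_boot zify.
Set Implicit Arguments. Unset Strict Implicit. Unset Printing Implicit Defensive.

(* The system is a binary counter.  Reading a configuration C as the number
   sum_v C(v) 2^v, adding 1 modulo 2^n flips bit v exactly when all bits below
   v are 1, and a map acting as +1 on Z/2^n is a single cycle.  In the star
   graph centred at v (joining v to every node u < v) the closed neighbourhood
   of v is {0, ..., v}; if s is the number of ones below v, the thresholds v
   and v + 1 on it, together with the threshold 1 on the edgeless graph
   (which reads C(v) alone), fire a number of times lying in {1, 2} exactly
   when C(v) xor [s = v].  So each node gets these three layers, the master
   function accepts 1 or 2 ones, and a node's local function in the layers of
   other nodes is the constant-0 threshold n + 1. *)

Definition binval (c : nat -> bool) (m : nat) : nat := \sum_(i < m) c i * 2 ^ i.

Definition carry (c : nat -> bool) (i : nat) : bool := i <= \sum_(j < i) c j.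

Lemma card_set_as_sum (T : finType) (P : pred T) : #|[set x | P x]| = \sum_x P x.
Proof. by rewrite -sum1dep_card big_mkcond; apply: eq_bigr => x _; case: (P x). Qed.

Lemma sum_bits_le (c : nat -> bool) m : \sum_(j < m) c j <= m.
Proof.
rewrite -[m in _ <= m]card_ord -sum1_card.
by apply: leq_sum => j _; case: (c j).
Qed.

Lemma binval_lt c m : binval c m < 2 ^ m.
Proof.
elim: m => [|m IH]; first by rewrite /binval big_ord0.
rewrite /binval big_ord_recr expnS /= -/(binval c m).
by case: (c m) => /=; lia.
Qed.

Lemma carryS c m : carry c m.+1 = carry c m && c m.
Proof.
have := sum_bits_le c m.
by rewrite /carry big_ord_recr /=; case: (c m) => /=; lia.
Qed.

Lemma binval_increment_carry c c' m :
    (forall i, i < m -> c' i = c i (+) carry c i) ->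
  binval c' m + 2 ^ m * carry c m = (binval c m).+1.
Proof.
elim: m => [|m IH] c'E; first by rewrite /binval !big_ord0.
have := IH (fun i lt_im => c'E i (ltnW lt_im)).
rewrite /binval !big_ord_recr /= carryS c'E // expnS.
by case: (c m); case: (carry c m) => /=; lia.
Qed.

Lemma binval_increment c c' m :
    (forall i, i < m -> c' i = c i (+) carry c i) ->
  binval c' m = (binval c m).+1 %% 2 ^ m.
Proof.
move=> /binval_increment_carry <-.
by rewrite addnC mulnC modnMDl modn_small // binval_lt.
Qed.

Lemma mod_counter_single_orbit (T : finType) (F : T -> T) (V : T -> nat) :
    (forall x, V x < #|T|) -> (forall x, V (F x) = (V x).+1 %% #|T|) ->
  forall x y, exists m, iter m F x = y.
Proof.
move=> V_lt VF x y.
have V_iter j : V (iter j F x) = (V x + j) %% #|T|.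
  elim: j => [|j IH]; first by rewrite addn0 modn_small.
  by rewrite iterS VF IH addnS -addn1 modnDml addn1.
have iter_inj : injective (fun j : 'I_#|T| => iter j F x).
  move=> i j /(congr1 V); rewrite !V_iter => /eqP; rewrite eqn_modDl.
  by rewrite !modn_small // => /eqP /val_inj.
have : y \in [set iter j F x | j : 'I_#|T|].
  suff -> : [set iter j F x | j : 'I_#|T|] = setT by rewrite inE.
  by apply/eqP; rewrite eqEcard subsetT cardsT card_imset // card_ord leqnn.
by case/imsetP => j _ ->; exists j.
Qed.

Section Threshold.
Variable n : nat.
Implicit Types (e : rel 'I_n) (u v : 'I_n) (C : config n).

Definition threshold e v (tau : nat) C : bool :=
  tau <= #|[set u in closed_nbhd e v | C u]|.

Lemma threshold_local e v tau : local_fun_of e v (threshold e v tau).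
Proof.
move=> C D CD; congr (_ <= _); apply: eq_card => u.
have [/CD CDu | /negPf Nu] := boolP (u \in closed_nbhd e v).
  by rewrite in_set [RHS]in_set CDu.
by rewrite in_set [RHS]in_set Nu.
Qed.

Lemma threshold_above_n e v C : threshold e v n.+1 C = false.
Proof.
apply/negbTE; rewrite -ltnNge ltnS.
by rewrite -[n in _ <= n]card_ord max_card.
Qed.

Definition empty_graph : rel 'I_n := fun _ _ => false.

Definition star_graph (c : 'I_n) : rel 'I_n :=
  fun u w => (u == c) && (w < c) || (w == c) && (u < c).

Lemma empty_graph_simple : simple_graph empty_graph.
Proof. by []. Qed.

Lemma star_graph_simple c : simple_graph (star_graph c).
Proof.
split=> [u w | v]; first by rewrite /star_graph orbC.
by rewrite /star_graph orbb; case: eqP => // ->; rewrite ltnn andbF.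
Qed.

Definition bits C (i : nat) : bool := oapp C false (insub i).

Lemma bits_ord C v : bits C v = C v.
Proof. by rewrite /bits valK. Qed.

Lemma card_nbhd_empty C v :
  #|[set u in closed_nbhd empty_graph v | C u]| = C v.
Proof.
case Cv: (C v).
  rewrite (_ : [set u in _ | C u] = [set v]) ?cards1 //.
  by apply/setP => u; rewrite !inE orbF; apply/andb_idr => /eqP ->.
rewrite (_ : [set u in _ | C u] = set0) ?cards0 //.
by apply/setP => u; rewrite !inE orbF; apply/andP => -[/eqP ->]; rewrite Cv.
Qed.

Lemma card_nbhd_star_center C c :
  #|[set u in closed_nbhd (star_graph c) c | C u]| = \sum_(j < c.+1) bits C j.
Proof.
rewrite (@big_ord_widen _ 0 addn c.+1 n (bits C)) // big_mkcond card_set_as_sum.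
apply: eq_bigr => u _; rewrite !inE /star_graph eqxx ltnn andbF orbF bits_ord.
by rewrite /= ltnS (leq_eqVlt u) -val_eqE; case: (_ || _); case: (C u).
Qed.

End Threshold.

Section BinaryCounterSystem.
Variable n : nat.
Implicit Types (v : 'I_n) (C : config n).

Definition layer := ('I_n * 'I_3)%type.

Definition layer_graph (l : layer) : rel 'I_n :=
  if l.2 == 2 :> nat then @empty_graph n else star_graph l.1.

Definition layer_threshold (l : layer) v : nat :=
  if l.1 == v then nth 0 [:: val v; v.+1; 1] l.2 else n.+1.

Definition layer_fun (l : layer) v : config n -> bool :=
  threshold (layer_graph l) v (layer_threshold l v).

Definition counter_graph (i : 'I_#|{: layer}|) := layer_graph (enum_val i).

Definition counter_fun (i : 'I_#|{: layer}|) := layer_fun (enum_val i).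

Definition counter_master v (x : {ffun 'I_#|{: layer}| -> bool}) : bool :=
  0 < #|[set i | x i]| < 3.

Local Notation counter_step := (msyds_step counter_fun counter_master).

Lemma counter_graph_simple i : simple_graph (counter_graph i).
Proof.
rewrite /counter_graph /layer_graph; case: ifP => _.
  exact: empty_graph_simple.
exact: star_graph_simple.
Qed.

Lemma card_firing_layers C v :
  #|[set i | [ffun i => counter_fun i v C] i]| = \sum_(r < 3) layer_fun (v, r) v C.
Proof.
have -> : [set i | [ffun i => counter_fun i v C] i] =
          enum_val @^-1: [set l | layer_fun l v C].
  by apply/setP => i; rewrite !inE ffunE.
rewrite on_card_preimset; last exact/onW_bij/enum_val_bij.
rewrite card_set_as_sum (eq_bigr (fun l => nat_of_bool (layer_fun (l.1, l.2) v C)));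
  last by case.
rewrite -(pair_bigA _ (fun u r => nat_of_bool (layer_fun (u, r) v C))) (bigD1 v) //=.
rewrite [X in _ + X]big1 ?addn0 // => u /negPf uv.
by apply: big1 => r _; rewrite /layer_fun /layer_threshold uv threshold_above_n.
Qed.

Lemma three_thresholds_xor (b : bool) (s m : nat) :
  s <= m -> (0 < (m <= s + b) + (m < s + b) + b < 3) = b (+) (m <= s).
Proof. by case: b; case: (leqP m s) => /=; lia. Qed.

Lemma counter_step_bit C v : counter_step C v = C v (+) carry (bits C) v.
Proof.
rewrite ffunE /counter_master card_firing_layers !big_ord_recr big_ord0 /=.
rewrite /layer_fun /layer_graph /layer_threshold eqxx /=.
rewrite /threshold card_nbhd_empty !card_nbhd_star_center big_ord_recr /= bits_ord add0n.
by rewrite lt0b three_thresholds_xor // sum_bits_le.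
Qed.

Lemma counter_step_binval C :
  binval (bits (counter_step C)) n = (binval (bits C) n).+1 %% 2 ^ n.
Proof.
apply: binval_increment => i lt_in.
have -> : i = Ordinal lt_in by [].
by rewrite !bits_ord counter_step_bit.
Qed.

Lemma counter_single_cycle : phase_space_single_cycle counter_step.
Proof.
have card_config : #|{: config n}| = 2 ^ n by rewrite card_ffun card_bool card_ord.
apply: (@mod_counter_single_orbit _ _ (fun C => binval (bits C) n)) => C.
  by rewrite card_config binval_lt.
by rewrite card_config counter_step_binval.
Qed.

End BinaryCounterSystem.

Theorem theorem3p3 :
  forall n : nat, 2 <= n ->
  exists (k : nat) (G : 'I_k -> rel 'I_n)
         (f : 'I_k -> 'I_n -> config n -> bool)
         (psi : 'I_n -> {ffun 'I_k -> bool} -> bool),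
    1 <= k /\
    (forall i, simple_graph (G i)) /\
    (forall i v, local_fun_of (G i) v (f i v)) /\
    (forall i v, is_threshold_fun (G i) v (f i v)) /\
    (forall v, symmetric_bfun (psi v)) /\
    phase_space_single_cycle (msyds_step f psi).
Proof.
move=> n n_ge2.
exists #|{: layer n}|, (@counter_graph n), (@counter_fun n), (@counter_master n).
split; first by rewrite card_prod !card_ord muln_gt0 (leq_trans _ n_ge2).
split; first exact: counter_graph_simple.
split; first by move=> i v; apply: threshold_local.
split; first by move=> i v; exists (layer_threshold (enum_val i) v).
split; first by move=> v x y xy; rewrite /counter_master xy.
exact: counter_single_cycle.
Qed.
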